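(* Let $\mathbf S=\langle S,+,0,\mathscr F\rangle$ be a semilattice with operators, let $I$ be an arbitrary index set, and let $\chi,\gamma$ and $\zeta_i$ ($i\in I$) be congruences on $\mathbf S$. For $\theta\in\operatorname{Con}\mathbf S$ let $\eta(\theta)$ and $\tau(\theta)$ be the least and greatest congruences with the same $0$-class as $\theta$. If $\eta(\chi)\le\gamma$ and $\bigwedge_{i\in I}\tau(\zeta_i)\le\tau(\gamma)$, then \[ \eta\Big(\eta(\chi)\vee\bigwedge_{i\in I}\tau(\chi\wedge\zeta_i)\Big)\le\gamma. \]
   Context: A semilattice with operators is a join semilattice $(S,+)$ with least element $0$ together with a set $\mathscr F$ of unary maps preserving $+$ and $0$; congruences are equivalence relations compatible with $+$ and all $f\in\mathscr F$, ordered by inclusion. If $J$ is the $0$-class of $\theta$, then $x\,\eta(\theta)\,y$ iff $x+j=y+j$ for some $j\in J$, and $x\,\tau(\theta)\,y$ iff for every $h$ in the monoid generated by $\mathscr F$ (including the identity), $h(x)\in J\Leftrightarrow h(y)\in J$. *)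

Record slo := SLO {
  car :> Type;
  sjoin : car -> car -> car;
  szero : car;
  sops : (car -> car) -> Prop;
  sjoin_assoc : forall x y z, sjoin x (sjoin y z) = sjoin (sjoin x y) z;
  sjoin_comm : forall x y, sjoin x y = sjoin y x;
  sjoin_idem : forall x, sjoin x x = x;
  szero_least : forall x, sjoin szero x = x;
  sops_join : forall f, sops f -> forall x y, f (sjoin x y) = sjoin (f x) (f y);
  sops_zero : forall f, sops f -> f szero = szero
}.

Definition rel (S : slo) := S -> S -> Prop.

Definition is_cong (S : slo) (t : rel S) : Prop :=
  (forall x, t x x) /\
  (forall x y, t x y -> t y x) /\
  (forall x y z, t x y -> t y z -> t x z) /\
  (forall x y x' y', t x y -> t x' y' -> t (sjoin S x x') (sjoin S y y')) /\
  (forall f, sops S f -> forall x y, t x y -> t (f x) (f y)).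

Definition cle (S : slo) (t u : rel S) : Prop := forall x y, t x y -> u x y.

Definition cmeet2 (S : slo) (t u : rel S) : rel S := fun x y => t x y /\ u x y.
Definition cbigmeet (S : slo) (I : Type) (t : I -> rel S) : rel S :=
  fun x y => forall i, t i x y.

Definition cjoin (S : slo) (t u : rel S) : rel S :=
  fun x y => forall p, is_cong S p -> cle S t p -> cle S u p -> p x y.

Inductive in_monoid (S : slo) : (S -> S) -> Prop :=
| mon_id : in_monoid S (fun x => x)
| mon_comp : forall f h, sops S f -> in_monoid S h -> in_monoid S (fun x => f (h x)).

Definition eta (S : slo) (t : rel S) : rel S :=
  fun x y => exists j, t j (szero S) /\ sjoin S x j = sjoin S y j.

Definition tau (S : slo) (t : rel S) : rel S :=
  fun x y => forall h, in_monoid S h -> (t (h x) (szero S) <-> t (h y) (szero S)).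

(* Let [R] be the meet of the [tau (chi /\ zeta i)].  The relation
   "x + c R y + c for some c in the 0-class of chi" is a congruence containing
   both [eta chi] and [R], hence the whole join.  So every j in the 0-class of the
   join comes with such a c, with j + c R c.  Since every h(c) lies in the 0-class
   of chi, this already gives j + c tau(zeta i) c for all i, hence j + c tau(gamma) c
   by hypothesis; as c is gamma-related to 0 (because eta chi <= gamma), so are
   j + c and j.  Finally eta of any congruence whose 0-class lies in that of gamma
   is below gamma. *)

From Stdlib Require Import Setoid.

Section SemilatticeCongruences.
Variable S : slo.
Notation "x + y" := (sjoin S x y).
Notation "0" := (szero S).

Lemma sjoin0r (x : S) : x + 0 = x.
Proof. rewrite sjoin_comm. apply szero_least. Qed.

Lemma sjoinACA (a b c d : S) : (a + b) + (c + d) = (a + c) + (b + d).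
Proof.
  rewrite <- !sjoin_assoc. f_equal.
  rewrite !sjoin_assoc. f_equal. apply sjoin_comm.
Qed.

Section Congruence.
Variable t : rel S.
Hypothesis Ht : is_cong S t.

Lemma cong_refl x : t x x.
Proof. destruct Ht as (r & _). apply r. Qed.

Lemma cong_sym x y : t x y -> t y x.
Proof. destruct Ht as (_ & s & _). apply s. Qed.

Lemma cong_trans x y z : t x y -> t y z -> t x z.
Proof. destruct Ht as (_ & _ & tr & _). apply tr. Qed.

Lemma cong_join x y x' y' : t x y -> t x' y' -> t (x + x') (y + y').
Proof. destruct Ht as (_ & _ & _ & j & _). apply j. Qed.

Lemma cong_op f x y : sops S f -> t x y -> t (f x) (f y).
Proof. destruct Ht as (_ & _ & _ & _ & o). intros Hf. apply o, Hf. Qed.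

Lemma cong_joinl x y z : t x y -> t (x + z) (y + z).
Proof. intros H. apply cong_join; [exact H | apply cong_refl]. Qed.

Lemma cong_zero_join a b : t (a + b) 0 <-> t a 0 /\ t b 0.
Proof.
  split.
  - intros H. split.
    + apply cong_trans with (a + (a + b)).
      * rewrite <- (sjoin0r a) at 1. apply cong_join; [apply cong_refl | apply cong_sym, H].
      * rewrite sjoin_assoc, sjoin_idem. exact H.
    + apply cong_trans with (b + (a + b)).
      * rewrite <- (sjoin0r b) at 1. apply cong_join; [apply cong_refl | apply cong_sym, H].
      * rewrite (sjoin_comm S a b), sjoin_assoc, sjoin_idem, sjoin_comm. exact H.
  - intros [Ha Hb]. rewrite <- (sjoin0r 0). apply cong_join; assumption.
Qed.

End Congruence.

Lemma monoid_join h : in_monoid S h -> forall x y, h (x + y) = h x + h y.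
Proof.
  induction 1 as [|f h Hf Hh IH]; intros x y; simpl; [reflexivity|].
  rewrite IH. apply sops_join, Hf.
Qed.

Lemma monoid_zero h : in_monoid S h -> h 0 = 0.
Proof.
  induction 1 as [|f h Hf Hh IH]; simpl; [reflexivity|].
  rewrite IH. apply sops_zero, Hf.
Qed.

Lemma monoid_cong t h : is_cong S t -> in_monoid S h -> forall x y, t x y -> t (h x) (h y).
Proof.
  intros Ht. induction 1 as [|f h Hf Hh IH]; intros x y Hxy; simpl; [exact Hxy|].
  apply (cong_op t Ht f _ _ Hf), IH, Hxy.
Qed.

Lemma monoid_precomp h f : in_monoid S h -> sops S f -> in_monoid S (fun x => h (f x)).
Proof.
  induction 1 as [|g h Hg Hh IH]; intros Hf.
  - exact (mon_comp S f (fun x => x) Hf (mon_id S)).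
  - exact (mon_comp S g (fun x => h (f x)) Hg (IH Hf)).
Qed.

Lemma cmeet2_cong t u : is_cong S t -> is_cong S u -> is_cong S (cmeet2 S t u).
Proof.
  intros Ht Hu. unfold cmeet2. repeat split; intros;
    repeat match goal with H : _ /\ _ |- _ => destruct H end;
    solve [ apply cong_refl; assumption | apply cong_sym; assumption
          | eapply cong_trans; eassumption | apply cong_join; assumption
          | apply cong_op; assumption ].
Qed.

Lemma cbigmeet_cong (I : Type) (t : I -> rel S) :
  (forall i, is_cong S (t i)) -> is_cong S (cbigmeet S I t).
Proof.
  intros Ht. unfold cbigmeet. refine (conj _ (conj _ (conj _ (conj _ _)))).
  - intros x i. apply cong_refl, Ht.
  - intros x y H i. apply cong_sym; auto.
  - intros x y z H H' i. apply (cong_trans (t i) (Ht i)) with y; auto.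
  - intros x y x' y' H H' i. apply cong_join; auto.
  - intros f Hf x y H i. apply cong_op; auto.
Qed.

Lemma cjoin_least t u p : is_cong S p -> cle S t p -> cle S u p -> cle S (cjoin S t u) p.
Proof. intros Hp Htp Hup x y H. exact (H p Hp Htp Hup). Qed.

Lemma tau_zero t x y : tau S t x y -> (t x 0 <-> t y 0).
Proof. intros H. exact (H _ (mon_id S)). Qed.

Lemma tau_cong t : is_cong S t -> is_cong S (tau S t).
Proof.
  intros Ht. refine (conj _ (conj _ (conj _ (conj _ _)))).
  - intros x h _. reflexivity.
  - intros x y H h Hh. symmetry. exact (H h Hh).
  - intros x y z Hxy Hyz h Hh. rewrite (Hxy h Hh). exact (Hyz h Hh).
  - intros x y x' y' H H' h Hh.
    rewrite !(monoid_join h Hh), !(cong_zero_join t Ht), (H h Hh), (H' h Hh).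
    reflexivity.
  - intros f Hf x y H h Hh. exact (H _ (monoid_precomp h f Hh Hf)).
Qed.

Lemma eta_zero t j : t j 0 -> eta S t j 0.
Proof.
  intros Hj. exists j. split; [exact Hj|].
  rewrite sjoin_idem, szero_least. reflexivity.
Qed.

Lemma eta_le t u : is_cong S u -> (forall j, t j 0 -> u j 0) -> cle S (eta S t) u.
Proof.
  intros Hu Htu x y (j & Hj & Exy).
  apply (cong_trans u Hu) with (x + j).
  - rewrite <- (sjoin0r x) at 1.
    apply (cong_join u Hu); [apply (cong_refl u Hu) | apply (cong_sym u Hu), Htu, Hj].
  - rewrite Exy. rewrite <- (sjoin0r y) at 2.
    apply (cong_join u Hu); [apply (cong_refl u Hu) | apply Htu, Hj].
Qed.

(* This is in fact the join of [eta chi] and [R]; only the inclusion of that join is needed. *)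
Definition shift_rel (chi R : rel S) : rel S :=
  fun x y => exists c, chi c 0 /\ R (x + c) (y + c).

Section ShiftRel.
Variables chi R : rel S.
Hypotheses (Hchi : is_cong S chi) (HR : is_cong S R).

Lemma shift_rel_cong : is_cong S (shift_rel chi R).
Proof.
  assert (Hc0 : forall c c', chi c 0 -> chi c' 0 -> chi (c + c') 0)
    by (intros c c' Hc Hc'; apply (cong_zero_join chi Hchi); auto).
  refine (conj _ (conj _ (conj _ (conj _ _)))).
  - intros x. exists 0. split; [apply cong_refl, Hchi | apply cong_refl, HR].
  - intros x y (c & Hc & H). exists c. split; [exact Hc | apply cong_sym; assumption].
  - intros x y z (c & Hc & H) (c' & Hc' & H'). exists (c + c'). split; [auto|].
    apply (cong_trans R HR) with (y + (c + c')).
    + rewrite !sjoin_assoc. apply cong_joinl; assumption.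
    + rewrite (sjoin_comm S c c'), !sjoin_assoc. apply cong_joinl; assumption.
  - intros x y x' y' (c & Hc & H) (c' & Hc' & H'). exists (c + c'). split; [auto|].
    rewrite (sjoinACA x x' c c'), (sjoinACA y y' c c'). apply cong_join; assumption.
  - intros f Hf x y (c & Hc & H). exists (f c). split.
    + rewrite <- (sops_zero S f Hf). apply cong_op; assumption.
    + rewrite <- !(sops_join S f Hf). apply cong_op; assumption.
Qed.

Lemma eta_le_shift_rel : cle S (eta S chi) (shift_rel chi R).
Proof.
  intros x y (c & Hc & E). exists c. split; [exact Hc|]. rewrite E. apply cong_refl, HR.
Qed.

Lemma le_shift_rel : cle S R (shift_rel chi R).
Proof.
  intros x y H. exists 0. split; [apply cong_refl, Hchi|]. rewrite !sjoin0r. exact H.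
Qed.

End ShiftRel.

(* Since every h(c) is chi-related to 0, the chi-component of [cmeet2] is automatic. *)
Lemma tau_cmeet2_shift chi zeta j c :
  is_cong S chi -> is_cong S zeta -> chi c 0 ->
  tau S (cmeet2 S chi zeta) (j + c) c -> tau S zeta (j + c) c.
Proof.
  intros Hchi Hzeta Hc H h Hh.
  assert (Hhc : chi (h c) 0)
    by (rewrite <- (monoid_zero h Hh); apply (monoid_cong chi h Hchi Hh), Hc).
  rewrite (monoid_join h Hh), (cong_zero_join zeta Hzeta). split; [tauto|].
  intros Hz. destruct (proj2 (H h Hh) (conj Hhc Hz)) as [_ Hjc].
  rewrite (monoid_join h Hh), (cong_zero_join zeta Hzeta) in Hjc. exact Hjc.
Qed.

End SemilatticeCongruences.

Theorem theorem7p1 (S : slo) (I : Type) (chi gamma : rel S) (zeta : I -> rel S)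
  (Hchi : is_cong S chi) (Hgamma : is_cong S gamma)
  (Hzeta : forall i, is_cong S (zeta i))
  (H1 : cle S (eta S chi) gamma)
  (H2 : cle S (cbigmeet S I (fun i => tau S (zeta i))) (tau S gamma)) :
  cle S (eta S (cjoin S (eta S chi)
                  (cbigmeet S I (fun i => tau S (cmeet2 S chi (zeta i))))))
        gamma.
Proof.
  set (R := cbigmeet S I (fun i => tau S (cmeet2 S chi (zeta i)))).
  assert (HR : is_cong S R)
    by (apply cbigmeet_cong; intro i; apply tau_cong, cmeet2_cong; auto).
  assert (Hjoin : cle S (cjoin S (eta S chi) R) (shift_rel S chi R))
    by (apply cjoin_least; auto using shift_rel_cong, eta_le_shift_rel, le_shift_rel).
  apply eta_le; [exact Hgamma|]. intros j Hj.
  destruct (Hjoin _ _ Hj) as (c & Hc & Hjc). rewrite szero_least in Hjc.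
  assert (Gc : gamma c (szero S)) by (apply H1, eta_zero, Hc).
  assert (Tjc : tau S gamma (sjoin S j c) c)
    by (apply H2; intro i; apply (tau_cmeet2_shift S chi); auto).
  apply (tau_zero S _ _ _ Tjc), (cong_zero_join S gamma Hgamma) in Gc.
  apply Gc.
Qed.
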